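(* Let $k$ be a positive integer, $G>0$, and let $g_1,\dots,g_k$ be strongly additive functions with $0\le g_j(p)\le G$ for all $j$ and all $p\in\mathcal P$, and assume $\mathfrak K=\max_{1\le i\le k}\sigma^{\mathcal P}(g_i)^2\ge1$. Then $$S:=\sum_{\substack{p_1,\dots,p_k\in\mathcal P\\ p_1\cdots p_k\text{ squarefull}\\ \#\{p_1,\dots,p_k\}<k/2}}H(p_1\cdots p_k)g_1(p_1)\cdots g_k(p_k)$$ satisfies $S\ll\mathfrak K^{k/2-1}$ if $k$ is even and $S\ll\mathfrak K^{(k-1)/2}$ if $k$ is odd, with implied constants depending only on $k$ and $G$.
   Context: $\mathcal P$ is a finite set of primes and $h$ is multiplicative with $0\le h(d)\le d$. Strongly additive: $g(n)=\sum_{p\mid n}g(p)$. $\sigma^{\mathcal P}(g)^2=\sum_{p\in\mathcal P}g(p)^2\frac{h(p)}p\big(1-\frac{h(p)}p\big)$. $H$ is multiplicative with $H(p^\alpha)=\frac{h(p)}p\big(1-\frac{h(p)}p\big)^\alpha+\big(-\frac{h(p)}p\big)^\alpha\big(1-\frac{h(p)}p\big)$. The sum is over ordered $k$-tuples; squarefull means every prime divisor appears at least squared. *)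

From HB Require Import structures.
From mathcomp Require Import all_boot all_order all_algebra.
Set Implicit Arguments. Unset Strict Implicit. Unset Printing Implicit Defensive.
Import Order.TTheory GRing.Theory Num.Theory.
Local Open Scope ring_scope.

Section Defs.
Variable R : realFieldType.

Definition multiplicative_fn (h : nat -> R) : Prop :=
  h 1%N = 1 /\ forall m n : nat, coprime m n -> h (m * n)%N = h m * h n.

Definition strongly_additive (g : nat -> R) : Prop :=
  forall n : nat, (0 < n)%N -> g n = \sum_(p <- primes n) g p.

Definition Hpp (h : nat -> R) (p a : nat) : R :=
  h p / p%:R * (1 - h p / p%:R) ^+ a + (- (h p / p%:R)) ^+ a * (1 - h p / p%:R).

Definition Hfun (h : nat -> R) (n : nat) : R :=
  \prod_(p <- primes n) Hpp h p (logn p n).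

Definition sigma2 (P : seq nat) (h : nat -> R) (g : nat -> R) : R :=
  \sum_(p <- P) g p ^+ 2 * (h p / p%:R) * (1 - h p / p%:R).

(* frak K = max_i sigma^P(g_i)^2 (all sigma2 are >= 0 under the hypotheses) *)
Definition Kmax (k : nat) (P : seq nat) (h : nat -> R) (g : 'I_k -> nat -> R) : R :=
  \big[Num.max/0]_(i < k) sigma2 P h (g i).

End Defs.
Local Close Scope ring_scope.

Definition squarefull (n : nat) : bool := all (fun p => (p ^ 2 %| n)%N) (primes n).

(* the sum S over ordered k-tuples (p_1,...,p_k) of elements of P, P a
   duplicate-free list; a tuple is encoded by indices t : 'I_k -> 'I_(size P) *)
Local Open Scope ring_scope.
Definition Ssum (R : realFieldType) (k : nat) (P : seq nat) (h : nat -> R)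
    (g : 'I_k -> nat -> R) : R :=
  \sum_(t : {ffun 'I_k -> 'I_(size P)} |
          squarefull (\prod_(i < k) nth 0%N P (t i))%N &&
          (2 * size (undup [seq nth 0%N P (t i) | i <- enum 'I_k]) < k)%N)
     Hfun h (\prod_(i < k) nth 0%N P (t i))%N * \prod_(i < k) g i (nth 0%N P (t i)).

(* Group the tuples (p_1, ..., p_k) by the partition of the indices induced by
   equal primes, recording each class by its first index.  Since p_1 ... p_k is
   squarefull, every class has at least two indices, and since there are fewer
   than k/2 distinct primes there are at most (k-1)/2 classes.  Bounding
   |H(p^a)| by h(p)/p (1 - h(p)/p) for a >= 2 and summing freely over the prime
   attached to each class, a class containing indices j <> i contributes at most
   G^k sum_p g_j(p) g_i(p) h(p)/p (1 - h(p)/p) <= G^k K by AM-GM, whence the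
   bound K^((k-1)/2), which is the claimed exponent in both parities. *)
From HB Require Import structures.
From mathcomp Require Import all_boot all_order all_algebra.
From mathcomp Require Import ring lra zify.
Import Order.TTheory GRing.Theory Num.Theory.
Set Implicit Arguments. Unset Strict Implicit. Unset Printing Implicit Defensive.
Local Open Scope ring_scope.

Lemma if_odd_half_pred k : (if odd k then k.-1./2 else (k./2).-1) = k.-1./2.
Proof. by case: (odd k) (odd_double_half k) => /= E; lia. Qed.

Lemma ler_sum_subpred (R : numDomainType) (I : finType) (A B : pred I) (F : I -> R) :
  (forall i, 0 <= F i) -> (forall i, A i -> B i) ->
  \sum_(i | A i) F i <= \sum_(i | B i) F i.
Proof.
move=> F0 AB; rewrite [X in X <= _]big_mkcond [X in _ <= X]big_mkcond.
apply: ler_sum => i _; case Ai: (A i); first by rewrite (AB i Ai).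
by case: (B i).
Qed.

Section LocalFactor.
Variables (R : realFieldType) (h : nat -> R) (p : nat).
Hypotheses (p_gt0 : (0 < p)%N) (hp : 0 <= h p <= p%:R).

Definition hvar : R := h p / p%:R * (1 - h p / p%:R).

Let q := h p / p%:R.

Let q_ge0 : 0 <= q.
Proof. by case/andP: hp => h0 _; rewrite divr_ge0. Qed.

Let q_le1 : q <= 1.
Proof. by case/andP: hp => _ hp'; rewrite ler_pdivrMr ?ltr0n // mul1r. Qed.

Lemma hvar_ge0 : 0 <= hvar.
Proof. by rewrite mulr_ge0 // subr_ge0. Qed.

Lemma normr_Hpp_le a : (2 <= a)%N -> `|Hpp h p a| <= hvar.
Proof.
case: a => [|[|b]] // _; rewrite /Hpp /hvar -/q.
have q0 := q_ge0; have q1 := q_le1.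
have qc0 : 0 <= 1 - q by rewrite subr_ge0.
have e1 : (1 - q) ^+ b.+2 <= (1 - q) ^+ 2.
  rewrite -addn2 exprD; apply: ler_piMl; first exact: exprn_ge0.
  by apply: exprn_ile1 => //; lra.
have e2 : `|(- q) ^+ b.+2| <= q ^+ 2.
  rewrite normrX normrN ger0_norm // -addn2 exprD.
  by apply: ler_piMl; [exact: exprn_ge0 | exact: exprn_ile1].
apply: le_trans (ler_normD _ _) _.
rewrite normrM (ger0_norm q0) (ger0_norm (exprn_ge0 _ qc0)) normrM (ger0_norm qc0).
have -> : q * (1 - q) = q * (1 - q) ^+ 2 + q ^+ 2 * (1 - q) by ring.
by apply: lerD; [exact: ler_wpM2l | exact: ler_wpM2r].
Qed.

End LocalFactor.

Section FirstOccurrence.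
Variables (m n : nat).
Implicit Types (t : {ffun 'I_m -> 'I_n}) (r : {ffun 'I_m -> 'I_m}).

Definition first_occ t : {ffun 'I_m -> 'I_m} :=
  [ffun i => nth i (enum 'I_m) (index (t i) [seq t j | j <- enum 'I_m])].

Let index_lt t i : (index (t i) [seq t j | j <- enum 'I_m] < m)%N.
Proof.
have Hin : t i \in [seq t j | j <- enum 'I_m] by rewrite map_f ?mem_enum.
by rewrite -index_mem size_map size_enum_ord in Hin.
Qed.

Lemma first_occE t i : t (first_occ t i) = t i.
Proof.
rewrite ffunE -(nth_map i (t i)) ?size_enum_ord ?index_lt //.
by rewrite nth_index // map_f ?mem_enum.
Qed.

Lemma first_occ_eq t i j : t i = t j -> first_occ t i = first_occ t j.
Proof.
move=> E; rewrite !ffunE E; apply: set_nth_default.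
by rewrite size_enum_ord index_lt.
Qed.

Lemma first_occ_idem t i : first_occ t (first_occ t i) = first_occ t i.
Proof. by apply: first_occ_eq; rewrite first_occE. Qed.

(* A function with first-occurrence map [r] is determined by its values at
   the fixed points of [r]; padding the other coordinates with those of a fixed
   [t0] embeds the left sum into the expanded product on the right. *)
Lemma sum_first_occ_le (R : numDomainType) r (f : 'I_m -> 'I_n -> R) :
  (forall j y, 0 <= f j y) ->
  \sum_(t | first_occ t == r) \prod_(j | r j == j) f j (t j)
    <= \prod_(j | r j == j) \sum_y f j y.
Proof.
move=> f0.
case: (pickP (fun t => first_occ t == r)) => [t0 _|none]; last first.
  rewrite (eq_bigl _ _ none) big_pred0_eq.
  by apply: prodr_ge0 => j _; apply: sumr_ge0.
pose F i y := if r i == i then f i y else (y == t0 i)%:R.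
pose Fprod (s : {ffun 'I_m -> 'I_n}) := \prod_i F i (s i).
pose ext t : {ffun 'I_m -> 'I_n} := [ffun i => if r i == i then t i else t0 i].
have extE t : \prod_(j | r j == j) f j (t j) = Fprod (ext t).
  rewrite /Fprod big_mkcond; apply: eq_bigr => i _; rewrite /F ffunE.
  by case: ifP; rewrite ?eqxx.
have ext_inj : {in [pred t | first_occ t == r] &, injective ext}.
  move=> t1 t2; rewrite !inE => /eqP r1 /eqP r2 E; apply/ffunP => i.
  have rri : r (r i) = r i by rewrite -r1 first_occ_idem.
  have := congr1 (fun s : {ffun 'I_m -> 'I_n} => s (r i)) E.
  by rewrite !ffunE rri eqxx -[t1 i]first_occE -[t2 i]first_occE r1 r2.
rewrite (eq_bigr (fun t => Fprod (ext t))); last by move=> t _; apply: extE.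
rewrite -(big_imset _ ext_inj) /=.
have F0 i y : 0 <= F i y by rewrite /F; case: ifP.
apply: le_trans (_ : \sum_s Fprod s <= _).
  by apply: ler_sum_subpred => // s; apply: prodr_ge0.
rewrite -(bigA_distr_bigA F) [X in _ <= X]big_mkcond /= le_eqVlt.
apply/predU1l/eq_bigr => i _; rewrite /F; case: ifP => // _.
by rewrite (bigD1 (t0 i)) //= eqxx big1 ?addr0 // => y /negbTE ->.
Qed.

End FirstOccurrence.

Section PrimeTuples.
Variables (R : realFieldType) (k : nat) (P : seq nat) (h : nat -> R).
Variables (g : 'I_k -> nat -> R) (G : R).
Hypotheses (uniqP : uniq P) (primeP : all prime P).
Hypothesis h_bound : forall d : nat, 0 <= h d <= d%:R.
Hypothesis g_bound : forall j p, p \in P -> 0 <= g j p <= G.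

Implicit Types (t : {ffun 'I_k -> 'I_(size P)}) (r : {ffun 'I_k -> 'I_k}).

Local Notation pr t i := (nth 0%N P (t i)).
Local Notation prodpr t := (\prod_(i < k) pr t i)%N.

Let pr_prime t i : prime (pr t i).
Proof. exact: allP primeP _ (mem_nth 0%N (ltn_ord (t i))). Qed.

Let prodpr_gt0 t : (0 < prodpr t)%N.
Proof. by apply: prodn_gt0 => i; apply: prime_gt0. Qed.

Lemma first_occ_pr t i j : pr t i = pr t j -> first_occ t i = first_occ t j.
Proof.
move=> E; apply: first_occ_eq; apply/val_inj/eqP.
by rewrite -(nth_uniq 0%N (s := P)) ?ltn_ord // E.
Qed.

Lemma perm_primes_prodpr t :
  perm_eq (primes (prodpr t))
          [seq pr t j | j <- [seq j <- index_enum 'I_k | first_occ t j == j]].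
Proof.
apply: uniq_perm; first exact: primes_uniq.
  rewrite map_inj_in_uniq ?filter_uniq ?index_enum_uniq //.
  move=> j j'; rewrite !mem_filter => /andP[/eqP Hj _] /andP[/eqP Hj' _].
  by move/first_occ_pr; rewrite Hj Hj'.
move=> p; apply/idP/idP.
  rewrite mem_primes => /and3P[pp _]; rewrite Euclid_dvd_prod // big_has.
  case/hasP => i _; rewrite dvdn_prime2 // => /eqP ->.
  apply/mapP; exists (first_occ t i); last by rewrite first_occE.
  by rewrite mem_filter first_occ_idem eqxx mem_index_enum.
case/mapP => j _ ->; rewrite mem_primes pr_prime prodpr_gt0 /=.
by rewrite (bigD1 j) //= dvdn_mulr.
Qed.

Lemma normr_Ssum_term_le t : squarefull (prodpr t) ->
  `|Hfun h (prodpr t) * \prod_(i < k) g i (pr t i)|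
    <= \prod_(j | first_occ t j == j)
         (hvar h (pr t j) * \prod_(i | first_occ t i == j) g i (pr t j)).
Proof.
move=> sq; have g_ge0 : 0 <= \prod_(i < k) g i (pr t i).
  by apply: prodr_ge0 => i _; case/andP: (g_bound i (mem_nth 0%N (ltn_ord (t i)))).
have normH : `|Hfun h (prodpr t)| <= \prod_(p <- primes (prodpr t)) hvar h p.
  move: sq; set N := prodpr t => sq.
  rewrite /Hfun normr_prod !big_seq; apply: ler_prod => p Hp.
  have pp : prime p by move: Hp; rewrite mem_primes => /and3P[].
  rewrite normr_ge0 /=; apply: normr_Hpp_le; [exact: prime_gt0 | exact: h_bound |].
  by rewrite -pfactor_dvdn //; [apply: (allP sq) | exact: prodpr_gt0].
rewrite normrM (ger0_norm g_ge0); apply: le_trans (ler_wpM2r g_ge0 normH) _.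
rewrite (perm_big _ (perm_primes_prodpr t)) big_map big_filter.
rewrite [X in _ * X](partition_big (first_occ t) (fun j => first_occ t j == j));
  last by move=> i _; rewrite first_occ_idem.
rewrite -big_split le_eqVlt; apply/predU1l/eq_bigr => j _.
by congr (_ * _); apply: eq_bigr => i /eqP <-; rewrite first_occE.
Qed.

Lemma first_occ_class_nontrivial t j :
  squarefull (prodpr t) -> first_occ t j = j ->
  exists2 i, i != j & first_occ t i = j.
Proof.
move=> sq Hj; case: (boolP [exists i, (i != j) && (first_occ t i == j)]).
  by case/existsP => i /andP[ij /eqP ?]; exists i.
move/existsPn => single; exfalso.
have pp := pr_prime t j.
have Hp : pr t j \in primes (prodpr t).
  by rewrite mem_primes pp prodpr_gt0 (bigD1 j) //= dvdn_mulr.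
have := allP sq _ Hp; rewrite (bigD1 j) //= expnS expn1 dvdn_pmul2l ?prime_gt0 //.
apply/negP; apply: (big_ind (fun n => ~~ (pr t j %| n)%N)).
- by rewrite dvdn1; apply/eqP => E; move: pp; rewrite E.
- by move=> a b Ha Hb; rewrite Euclid_dvdM // negb_or Ha Hb.
move=> i ij; rewrite dvdn_prime2 //; apply/negP => /eqP E.
by have := single i; rewrite ij (first_occ_pr (esym E)) Hj eqxx.
Qed.

Lemma card_first_occ_fixed t :
  (#|[pred j | first_occ t j == j]| <= size (undup [seq pr t i | i <- enum 'I_k]))%N.
Proof.
rewrite cardE -(size_map (fun j => pr t j)); apply: uniq_leq_size.
  rewrite map_inj_in_uniq ?enum_uniq //.
  move=> j j'; rewrite !mem_enum !inE => /eqP Hj /eqP Hj'.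
  by move/first_occ_pr; rewrite Hj Hj'.
by move=> p /mapP[j _ ->]; rewrite mem_undup; apply/mapP; exists j; rewrite ?mem_enum.
Qed.

Definition Ssum_cond t :=
  squarefull (prodpr t) && (2 * size (undup [seq pr t i | i <- enum 'I_k]) < k)%N.

Let Gm := Num.max 1 G.

Let Gm_ge1 : 1 <= Gm.
Proof. by rewrite le_max lexx. Qed.

Let Gm_ge0 : 0 <= Gm.
Proof. exact: le_trans Gm_ge1. Qed.

Let sigma2_term i p := g i p ^+ 2 * (h p / p%:R) * (1 - h p / p%:R).

Lemma class_term_le r (j i1 : 'I_k) p : p \in P ->
  r j = j -> i1 != j -> r i1 = j ->
  hvar h p * \prod_(i | r i == j) g i p
    <= Gm ^+ k * ((sigma2_term j p + sigma2_term i1 p) / 2).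
Proof.
move=> Hp Hj ij ri1.
have w0 : 0 <= hvar h p by apply/hvar_ge0/h_bound/prime_gt0/(allP primeP).
rewrite (bigD1 j) ?Hj ?eqxx //= (bigD1 i1) /=; last by rewrite ri1 eqxx ij.
set c := \prod_(i | _) _; set a := g j p; set b := g i1 p.
have /andP[a0 _] := g_bound j Hp; have /andP[b0 _] := g_bound i1 Hp.
have c0 : 0 <= c by apply: prodr_ge0 => i _; case/andP: (g_bound i Hp).
have cG : c <= Gm ^+ k.
  apply: le_trans (_ : \prod_(i | ((r i == j) && (i != j)) && (i != i1)) Gm <= _).
    apply: ler_prod => i _; case/andP: (g_bound i Hp) => -> /= gi.
    by rewrite le_max gi orbT.
  rewrite prodr_const; apply: ler_weXn2l => //.
  by rewrite -[X in (_ <= X)%N](card_ord k) max_card.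
have amgm : a * b <= (a ^+ 2 + b ^+ 2) / 2.
  have := sqr_ge0 (a - b); rewrite sqrrB; lra.
have -> : Gm ^+ k * ((sigma2_term j p + sigma2_term i1 p) / 2)
          = hvar h p * ((a ^+ 2 + b ^+ 2) / 2) * Gm ^+ k.
  by rewrite /sigma2_term /hvar /a /b; ring.
have -> : hvar h p * (a * (b * c)) = hvar h p * (a * b) * c by ring.
apply: le_trans (_ : hvar h p * (a * b) * Gm ^+ k <= _).
  by apply: ler_wpM2l => //; apply/mulr_ge0/mulr_ge0.
by apply: ler_wpM2r; [exact: exprn_ge0 Gm_ge0 | exact: ler_wpM2l].
Qed.

Lemma sum_class_le r (j i1 : 'I_k) :
  r j = j -> i1 != j -> r i1 = j ->
  \sum_(y < size P) hvar h (nth 0%N P y) * \prod_(i | r i == j) g i (nth 0%N P y)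
    <= Gm ^+ k * Kmax P h g.
Proof.
move=> Hj ij ri1.
apply: le_trans (_ : \sum_(y < size P) Gm ^+ k *
    ((sigma2_term j (nth 0%N P y) + sigma2_term i1 (nth 0%N P y)) / 2) <= _).
  by apply: ler_sum => y _; apply: class_term_le => //; apply: mem_nth.
rewrite -mulr_sumr; apply: ler_wpM2l; first exact: exprn_ge0 Gm_ge0.
have sum_nth (F : nat -> R) : \sum_(y < size P) F (nth 0%N P y) = \sum_(p <- P) F p.
  by rewrite (big_nth 0%N) big_mkord.
rewrite -mulr_suml big_split /= !sum_nth.
have Kj : sigma2 P h (g j) <= Kmax P h g by apply: (le_bigmax 0 _ j).
have Ki : sigma2 P h (g i1) <= Kmax P h g by apply: (le_bigmax 0 _ i1).
rewrite /sigma2 in Kj Ki; lra.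
Qed.

Lemma sum_pattern_le r : 1 <= Kmax P h g ->
  \sum_(t | Ssum_cond t && (first_occ t == r))
     `|Hfun h (prodpr t) * \prod_(i < k) g i (pr t i)|
  <= Gm ^+ (k * k) * Kmax P h g ^+ k.-1./2.
Proof.
move=> K1; have Gm0 := Gm_ge0.
have K0 : 0 <= Kmax P h g by apply: le_trans K1.
case: (pickP (fun t => Ssum_cond t && (first_occ t == r))) => [t0 /andP[/andP[sq0 few0] /eqP r0]|none]; last first.
  by rewrite (eq_bigl _ _ none) big_pred0_eq mulr_ge0 ?exprn_ge0.
pose f j (y : 'I_(size P)) :=
  hvar h (nth 0%N P y) * \prod_(i | r i == j) g i (nth 0%N P y).
have f0 j y : 0 <= f j y.
  have Py : nth 0%N P y \in P by apply: mem_nth.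
  apply: mulr_ge0; first exact/hvar_ge0/h_bound/prime_gt0/(allP primeP).
  by apply: prodr_ge0 => i _; case/andP: (g_bound i Py).
apply: le_trans (_ : \sum_(t | first_occ t == r) \prod_(j | r j == j) f j (t j) <= _).
  apply: le_trans (_ : \sum_(t | _ && (first_occ t == r)) \prod_(j | r j == j) f j (t j) <= _).
    apply: ler_sum => t /andP[/andP[sq _] /eqP tr].
    by rewrite /f -tr; apply: normr_Ssum_term_le.
  by apply: ler_sum_subpred => [t|t /andP[]//]; apply: prodr_ge0.
apply: le_trans (sum_first_occ_le r f0) _.
apply: le_trans (_ : \prod_(j | r j == j) (Gm ^+ k * Kmax P h g) <= _).
  apply: ler_prod => j /eqP rj; rewrite sumr_ge0 //=.
  have [i1 i1j] : exists2 i1, i1 != j & first_occ t0 i1 = j.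
    by apply: first_occ_class_nontrivial; rewrite ?r0.
  by rewrite r0; apply: sum_class_le.
have few : (#|[pred j | r j == j]| <= k.-1./2)%N.
  by have := card_first_occ_fixed t0; rewrite r0; lia.
rewrite prodr_const exprMn -exprM.
apply: ler_pM; rewrite ?exprn_ge0 // ler_weXn2l //.
by rewrite leq_mul2l -[X in (_ <= X)%N](card_ord k) max_card orbT.
Qed.

End PrimeTuples.

Theorem mainTheorem11 (R : realFieldType) (k : nat) (G : R) :
  (0 < k)%N -> 0 < G ->
  exists C : R,
    forall (P : seq nat) (h : nat -> R) (g : 'I_k -> nat -> R),
      uniq P -> all prime P ->
      multiplicative_fn h -> (forall d : nat, 0 <= h d <= d%:R) ->
      (forall j, strongly_additive (g j)) ->
      (forall j p, p \in P -> 0 <= g j p <= G) ->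
      1 <= Kmax P h g ->
      `|Ssum P h g| <=
        C * Kmax P h g ^+ (if odd k then k.-1./2 else (k./2).-1).
Proof.
move=> _ _; exists (#|{ffun 'I_k -> 'I_k}|%:R * Num.max 1 G ^+ (k * k)).
move=> P h g uniqP primeP _ h_bound _ g_bound K1; rewrite if_odd_half_pred.
apply: le_trans (ler_norm_sum _ _ _) _.
rewrite (partition_big (@first_occ k (size P)) xpredT) //=.
apply: le_trans (_ : \sum_(r : {ffun 'I_k -> 'I_k})
    Num.max 1 G ^+ (k * k) * Kmax P h g ^+ k.-1./2 <= _).
  by apply: ler_sum => r _; apply: sum_pattern_le.
by rewrite sumr_const -mulrA mulr_natl cardT -cardE.
Qed.
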